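(* Let $f\in\mathcal{R}$ with $f(z)=z+\sum_{n=2}^\infty a_nz^n$, and let $\Gamma_1=-\tfrac12 a_2$, $\Gamma_2=-\tfrac12\left(a_3-\tfrac32 a_2^2\right)$. Then $|\Gamma_1|\le\frac12$ and $|\Gamma_2|\le\frac{5}{12}$, and both bounds are attained by some $f\in\mathcal{R}$.
   Context: $\mathbb{D}$ is the open unit disk; $\mathcal{A}$ is the class of holomorphic $f$ on $\mathbb{D}$ with $f(0)=0$, $f'(0)=1$; $\mathcal{R}=\{f\in\mathcal{A}:\operatorname{Re} f'(z)>0\ \forall z\in\mathbb{D}\}$. $\Gamma_n$ are defined by $\log(f^{-1}(w)/w)=2\sum_{n\ge1}\Gamma_nw^n$. *)

From Stdlib Require Import Reals.
From Coquelicot Require Import Coquelicot.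
Open Scope R_scope.

Definition in_disk (z : C) : Prop := Cmod z < 1.

Definition holo_on_disk_with_deriv (f f' : C -> C) : Prop :=
  forall z : C, in_disk z -> is_derive (K := C_AbsRing) (V := C_NormedModule) f z (f' z).

Definition in_class_R (f : C -> C) : Prop :=
  exists f' : C -> C,
    holo_on_disk_with_deriv f f' /\ f 0 = 0 /\ f' 0 = 1 /\
    (forall z : C, in_disk z -> 0 < Re (f' z)).

Definition has_coeffs (f : C -> C) (a : nat -> C) : Prop :=
  forall z : C, in_disk z ->
    is_series (V := C_NormedModule)
      (fun n : nat => if (n <? 2)%nat then (0 : C) else Cmult (a n) (pow_n z n))
      (Cminus (f z) z).

Definition Gamma1 (a : nat -> C) : C := Cmult (-(1/2))%R (a 2%nat).
Definition Gamma2 (a : nat -> C) : C :=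
  Cmult (-(1/2))%R (Cminus (a 3%nat) (Cmult (3/2)%R (Cmult (a 2%nat) (a 2%nat)))).

From Stdlib Require Import Reals Lra Lia ClassicalEpsilon.
From Coquelicot Require Import Coquelicot.
Open Scope R_scope.

(** Since [Re f' > 0], every difference quotient [(f z2 - f z1) / (z2 - z1)] of [f] in the
    disk has positive real part (mean value theorem along the segment).  For [z1 = r w],
    [z2 = r' w] this quotient is the power series [g w = sum_m b_m w^m] with
    [b_m = a_(m+1) (r'^(m+1) - r^(m+1)) / (r' - r)] (and [a_1 = 1]).  Averaging
    [g(w) |P(w)|^2] over the [(N+1)]-st roots of unity, for a polynomial
    [P = sum_(j <= d) x_j w^j] and [N] large, isolates [sum_m b_m rho_m] with the
    autocorrelations [rho_m = sum_j x_j conj(x_(j+m))]; hence [Re (sum_m b_m rho_m) >= 0] up to a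
    geometrically small truncation error.  Letting [r, r' -> 1] yields the Caratheodory-Toeplitz
    condition [Re (rho_0 + 2 a_2 rho_1 + 3 a_3 rho_2) >= 0] for [f' = 1 + 2 a_2 z + 3 a_3 z^2 + ...],
    and two choices of [(x_0, x_1, x_2)] give [|a_2| <= 1] and [|a_3 - 3/2 a_2^2| <= 5/6].
    Both bounds are attained by [f z = - z - 2 log (1 - z)], with [f' = (1 + z) / (1 - z)]
    and [a_n = 2 / n]. *)

(* [sum_n] lives in [AbelianMonoid.sort C_AbelianMonoid]; [ring] needs the equation at type [C]. *)
Ltac Cring := lazymatch goal with |- ?a = ?b => change (@eq C a b); ring end.

Lemma pow_n_Cpow (z : C) n : pow_n z n = (z ^ n)%C.
Proof. induction n as [|n IH]; [reflexivity|]. simpl. now rewrite IH. Qed.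

Lemma sum_Sn_C (u : nat -> C) n : sum_n u (S n) = (sum_n u n + u (S n))%C.
Proof. exact (sum_Sn u n). Qed.

Lemma sum_n_Cmult_l (c : C) (u : nat -> C) n :
  sum_n (fun k => c * u k)%C n = (c * sum_n u n)%C.
Proof. exact (sum_n_mult_l c u n). Qed.

Lemma Cconj_RtoC (r : R) : Cconj (RtoC r) = RtoC r.
Proof. unfold Cconj, RtoC; simpl. f_equal. ring. Qed.

Lemma sum_n_Cmult_r (c : C) (u : nat -> C) n :
  sum_n (fun k => u k * c)%C n = (sum_n u n * c)%C.
Proof. exact (sum_n_mult_r c u n). Qed.

Lemma sum_n_C0 n : sum_n (fun _ => RtoC 0) n = RtoC 0.
Proof. induction n as [|n IH]; [apply sum_O|]. rewrite sum_Sn_C, IH. Cring. Qed.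

Lemma Re_Cminus (u v : C) : Re (u - v)%C = Re u - Re v.
Proof. destruct u, v; unfold Re; simpl. ring. Qed.

Lemma Re_Cmult_RtoC (z : C) (r : R) : Re (z * RtoC r)%C = Re z * r.
Proof. destruct z; unfold Re, Cmult; simpl. ring. Qed.

Lemma Re_RtoC_Cmult (r : R) (z : C) : Re (RtoC r * z)%C = r * Re z.
Proof. destruct z; unfold Re, Cmult; simpl. ring. Qed.

Lemma sum_n_Rle (u v : nat -> R) n : (forall k, (k <= n)%nat -> u k <= v k) ->
  sum_n u n <= sum_n v n.
Proof.
  intros H. induction n as [|n IH]; [rewrite !sum_O; apply H; lia|].
  rewrite !sum_Sn. apply Rplus_le_compat; [apply IH; intros; apply H|apply H]; lia.
Qed.

Lemma Re_sum_n (u : nat -> C) n : Re (sum_n u n) = sum_n (fun k => Re (u k)) n.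
Proof.
  induction n as [|n IH]; [now rewrite !sum_O|].
  now rewrite sum_Sn_C, sum_Sn, <- IH.
Qed.

Lemma is_series_C_limit (u : nat -> C) l :
  (forall eps, 0 < eps -> exists N, forall n, (N <= n)%nat -> Cmod (sum_n u n - l) < eps) ->
  is_series (V := C_NormedModule) u l.
Proof.
  intros H. apply filterlim_locally_ball_norm. intros eps.
  destruct (H eps (cond_pos eps)) as [N HN]. exists N. exact HN.
Qed.

Lemma is_series_Cmod_le (u : nat -> C) l w K :
  is_series (V := C_NormedModule) u l ->
  eventually (fun n => Cmod (sum_n u n - w) <= K) -> Cmod (l - w) <= K.
Proof.
  intros Hl Hb.
  apply (closed_filterlim_loc (sum_n u) (fun y : C => Cmod (y - w) <= K) l Hl).
  - exact Hb.
  - apply (closed_comp (fun y : C => Cmod (y - w)) (fun r => r <= K)); [|apply closed_le].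
    intros y. apply (filterlim_comp _ _ _ (fun y : C => minus y w) norm _ (locally (minus y w))).
    + apply (continuous_minus (fun y : C => y) (fun _ => w)); [apply continuous_id|apply continuous_const].
    + exact (filterlim_norm (K := C_AbsRing) (V := C_NormedModule) (y - w)%C).
Qed.

Lemma geom_sum_n_m_le (q : R) m n : 0 <= q < 1 ->
  sum_n_m (fun k => q ^ k) m n <= q ^ m / (1 - q).
Proof.
  intros Hq.
  assert (Hgeom : forall j, (1 - q) * sum_n_m (fun k => q ^ k) m (m + j) = q ^ m - q ^ (S (m + j))).
  { induction j as [|j IH].
    - rewrite Nat.add_0_r, sum_n_n. simpl. ring.
    - rewrite Nat.add_succ_r, sum_n_Sm by lia. change plus with Rplus.
      rewrite Rmult_plus_distr_l, IH. simpl. ring. }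
  destruct (Nat.le_gt_cases m n) as [Hmn|Hmn].
  - replace n with (m + (n - m))%nat by lia.
    apply (Rmult_le_reg_l (1 - q)); [lra|]. rewrite Hgeom.
    replace ((1 - q) * (q ^ m / (1 - q))) with (q ^ m) by (field; lra).
    pose proof (pow_le q (S (m + (n - m))) (proj1 Hq)). lra.
  - rewrite sum_n_m_zero by lia. apply Rdiv_le_0_compat; [apply pow_le|]; lra.
Qed.

Lemma is_series_tail_geom_le (u : nat -> C) L c q M :
  is_series (V := C_NormedModule) u L -> 0 <= q < 1 ->
  (forall n, Cmod (u n) <= c * q ^ n) ->
  Cmod (L - sum_n u M) <= c * q ^ (S M) / (1 - q).
Proof.
  intros HL Hq Hu.
  apply (is_series_Cmod_le u L); [exact HL|].
  exists (S M). intros n Hn.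
  replace (sum_n u n - sum_n u M)%C with (sum_n_m u (S M) n)
    by exact (sum_n_m_sum_n (G := C_AbelianGroup) u M n ltac:(lia)).
  eapply Rle_trans; [apply (norm_sum_n_m (V := C_NormedModule))|].
  eapply Rle_trans; [apply (sum_n_m_le _ (fun k => c * q ^ k)); exact Hu|].
  rewrite (sum_n_m_ext _ (fun k => scal c (q ^ k))) by reflexivity.
  rewrite sum_n_m_scal_l. change scal with Rmult. unfold Rdiv. rewrite Rmult_assoc.
  assert (Hc : 0 <= c) by (specialize (Hu 0%nat); pose proof (Cmod_ge_0 (u 0%nat)); simpl in Hu; lra).
  apply Rmult_le_compat_l; [exact Hc|]. apply geom_sum_n_m_le; exact Hq.
Qed.

Lemma Cgeom_sum (q : C) n : ((q - 1) * sum_n (fun k => q ^ k) n = q ^ (S n) - 1)%C.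
Proof.
  induction n as [|n IH]; [rewrite sum_O; simpl; ring|].
  rewrite sum_Sn_C, Cmult_plus_distr_l, IH. change (q ^ S (S n))%C with (q * q ^ S n)%C. ring.
Qed.

Lemma Cminus_1_neq_0 (z : C) : Cmod z < 1 -> (1 - z)%C <> RtoC 0.
Proof.
  intros Hz E. assert (z = RtoC 1) by (replace z with (1 - (1 - z))%C by ring; rewrite E; ring).
  subst. rewrite Cmod_1 in Hz. lra.
Qed.

Lemma is_series_Cgeom (z : C) : Cmod z < 1 ->
  is_series (V := C_NormedModule) (fun n => (z ^ n)%C) (/ (1 - z))%C.
Proof.
  intros Hz. pose proof (Cminus_1_neq_0 z Hz) as Hz1.
  assert (Hm : 0 < Cmod (1 - z)) by (apply Cmod_gt_0; exact Hz1).
  apply is_series_C_limit. intros eps Heps.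
  destruct (pow_lt_1_zero (Cmod z) ltac:(rewrite Rabs_pos_eq by apply Cmod_ge_0; lra)
              (eps * Cmod (1 - z)) ltac:(apply Rmult_lt_0_compat; lra)) as [N HN].
  exists N. intros n Hn.
  assert (E : (sum_n (fun k => z ^ k) n - / (1 - z) = - z ^ S n / (1 - z))%C).
  { assert (Hz1' : (z - 1)%C <> RtoC 0)
      by (intro h; apply Hz1; replace (1 - z)%C with (- (z - 1))%C by ring; rewrite h; ring).
    transitivity ((z - 1) * sum_n (fun k => z ^ k) n / (z - 1) - / (1 - z))%C;
      [field; split; assumption|].
    rewrite Cgeom_sum. field. split; assumption. }
  rewrite E. unfold Cdiv. rewrite Cmod_mult, Cmod_opp, Cmod_inv, Cmod_pow by exact Hz1.
  specialize (HN (S n) ltac:(lia)). rewrite Rabs_pos_eq in HN by (apply pow_le, Cmod_ge_0).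
  apply (Rmult_lt_reg_r (Cmod (1 - z))); [lra|].
  rewrite Rmult_assoc, Rinv_l, Rmult_1_r by lra. exact HN.
Qed.

Lemma sum_n_Cconj (u : nat -> C) n : sum_n (fun k => Cconj (u k)) n = Cconj (sum_n u n).
Proof.
  induction n as [|n IH]; [now rewrite !sum_O|]. now rewrite !sum_Sn_C, IH, Cplus_conj.
Qed.

Lemma sum_n_C1 n : sum_n (fun _ => RtoC 1) n = RtoC (INR (S n)).
Proof.
  induction n as [|n IH]; [rewrite sum_O; reflexivity|].
  rewrite sum_Sn_C, IH, (S_INR (S n)), RtoC_plus. reflexivity.
Qed.

Definition cis (t : R) : C := (cos t, sin t).

Lemma cis_add a b : (cis a * cis b)%C = cis (a + b).
Proof. unfold cis, Cmult; simpl. rewrite cos_plus, sin_plus. f_equal; ring. Qed.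

Lemma Cpow_cis t n : (cis t ^ n)%C = cis (INR n * t).
Proof.
  induction n as [|n IH].
  - simpl. unfold cis. rewrite Rmult_0_l, cos_0, sin_0. reflexivity.
  - rewrite Cpow_S, IH, cis_add, S_INR. f_equal. ring.
Qed.

Lemma cis_mul_conj t : (cis t * Cconj (cis t))%C = RtoC 1.
Proof.
  unfold cis, Cmult, Cconj; simpl. pose proof (sin2_cos2 t) as H. unfold Rsqr in H.
  unfold RtoC. f_equal; lra.
Qed.

Lemma Cmod_cis t : Cmod (cis t) = 1.
Proof.
  unfold Cmod, cis; simpl. pose proof (sin2_cos2 t) as H. unfold Rsqr in H.
  replace (cos t * (cos t * 1) + sin t * (sin t * 1)) with 1 by lra. apply sqrt_1.
Qed.

Lemma cis_neq_1 t : 0 < t < 2 * PI -> cis t <> RtoC 1.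
Proof.
  intros Ht E. injection E as Ec Es.
  destruct (sin_eq_O_2PI_0 t ltac:(lra) ltac:(lra) Es) as [h|[h|h]]; try lra.
  subst. rewrite cos_PI in Ec. lra.
Qed.

Definition unit_root (N k : nat) : C := cis (2 * PI * INR k / INR (S N)).

Lemma sum_unit_root_pow N j : (1 <= j <= N)%nat ->
  sum_n (fun k => unit_root N k ^ j)%C N = RtoC 0.
Proof.
  intros Hj.
  set (q := cis (2 * PI * INR j / INR (S N))).
  assert (HN : 0 < INR (S N)) by (apply lt_0_INR; lia).
  rewrite (sum_n_ext _ (fun k => q ^ k)%C).
  2:{ intro k. unfold unit_root, q. rewrite !Cpow_cis. f_equal. field. lra. }
  assert (Hq1 : q <> RtoC 1).
  { apply cis_neq_1. assert (1 <= INR j) by (apply (le_INR 1); lia).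
    assert (INR j < INR (S N)) by (apply lt_INR; lia). pose proof PI_RGT_0.
    split.
    - apply Rdiv_lt_0_compat; [nra|lra].
    - apply (Rmult_lt_reg_r (INR (S N))); [lra|].
      unfold Rdiv. rewrite Rmult_assoc, Rinv_l; nra. }
  assert (HqN : (q ^ S N)%C = RtoC 1).
  { unfold q. rewrite Cpow_cis.
    replace (INR (S N) * (2 * PI * INR j / INR (S N))) with (INR j * (2 * PI)) by (field; lra).
    rewrite <- Cpow_cis. unfold cis at 1. rewrite cos_2PI, sin_2PI. apply Cpow_1_l. }
  assert (Hq : (q - 1)%C <> RtoC 0)
    by (intro h; apply Hq1; replace q with ((q - 1) + 1)%C by ring; rewrite h; ring).
  pose proof (Cgeom_sum q N) as G. rewrite HqN in G.
  rewrite <- (Cmult_1_l (sum_n _ N)), <- (Cinv_l _ Hq), <- Cmult_assoc, G.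
  change (@eq C (/ (q - 1) * (RtoC 1 - 1))%C (RtoC 0)). ring.
Qed.

Lemma pow_mul_conj_pow (w : C) e l : (w * Cconj w = 1)%C ->
  (w ^ e * Cconj w ^ l)%C = if (l <=? e)%nat then (w ^ (e - l))%C else (Cconj w ^ (l - e))%C.
Proof.
  intros Hw. destruct (Nat.leb_spec l e) as [Hle|Hlt].
  - replace e with (l + (e - l))%nat at 1 by lia.
    rewrite Cpow_add_r, <- Cmult_assoc, (Cmult_comm _ (Cconj w ^ l)), Cmult_assoc,
      <- Cpow_mult_l, Hw, Cpow_1_l. ring.
  - replace l with (e + (l - e))%nat at 1 by lia.
    rewrite Cpow_add_r, Cmult_assoc, <- Cpow_mult_l, Hw, Cpow_1_l. ring.
Qed.

Lemma sum_unit_root_orth N e l : (e <= N)%nat -> (l <= N)%nat ->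
  sum_n (fun k => unit_root N k ^ e * Cconj (unit_root N k) ^ l)%C N =
  if (e =? l)%nat then RtoC (INR (S N)) else RtoC 0.
Proof.
  intros He Hl.
  rewrite (sum_n_ext _ _ _ (fun k => pow_mul_conj_pow (unit_root N k) e l (cis_mul_conj _))).
  destruct (Nat.eqb_spec e l) as [->|Hne].
  - rewrite Nat.leb_refl, Nat.sub_diag. exact (sum_n_C1 N).
  - destruct (Nat.leb_spec l e).
    + apply sum_unit_root_pow. lia.
    + rewrite (sum_n_ext _ (fun k => Cconj (unit_root N k ^ (l - e)))) by (intro; symmetry; apply Cpow_conj).
      rewrite sum_n_Cconj, sum_unit_root_pow, Cconj_RtoC by lia. reflexivity.
Qed.

(** * Averaging over roots of unity *)

Lemma sum_n_kronecker (u : nat -> C) i d :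
  sum_n (fun l => if (i =? l)%nat then u l else RtoC 0) d =
  if (i <=? d)%nat then u i else RtoC 0.
Proof.
  induction d as [|d IH].
  - rewrite sum_O. destruct (Nat.eqb_spec i 0) as [->|]; [reflexivity|].
    destruct (Nat.leb_spec i 0); [lia|reflexivity].
  - rewrite sum_Sn_C, IH. destruct (Nat.eqb_spec i (S d)) as [->|Hne].
    + rewrite Nat.leb_refl, (proj2 (Nat.leb_gt (S d) d) ltac:(lia)). apply Cplus_0_l.
    + rewrite Cplus_0_r. destruct (Nat.leb_spec i d), (Nat.leb_spec i (S d)); auto; lia.
Qed.

Definition poly_eval (x : nat -> C) (d : nat) (w : C) : C := sum_n (fun j => x j * w ^ j)%C d.

Definition autocorr (x : nat -> C) (d m : nat) : C := sum_n (fun j => x j * Cconj (x (j + m)%nat))%C d.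

Lemma Cconj_poly_eval x d w :
  Cconj (poly_eval x d w) = sum_n (fun l => Cconj (x l) * Cconj w ^ l)%C d.
Proof.
  unfold poly_eval. rewrite <- sum_n_Cconj. apply sum_n_ext. intro l.
  now rewrite Cmult_conj, Cpow_conj.
Qed.

Section Autocorrelation.

Variables (x : nat -> C) (d : nat).
Hypothesis x_support : forall j, (d < j)%nat -> x j = RtoC 0.

Lemma sum_unit_root_pow_mul_sqnorm m N : (m + d <= N)%nat ->
  sum_n (fun k => unit_root N k ^ m *
                  (poly_eval x d (unit_root N k) * Cconj (poly_eval x d (unit_root N k))))%C N =
  (INR (S N) * autocorr x d m)%C.
Proof.
  intros Hmd.
  set (u := fun j l k =>
    (x j * Cconj (x l) * (unit_root N k ^ (j + m) * Cconj (unit_root N k) ^ l))%C).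
  rewrite (sum_n_ext _ (fun k => sum_n (fun j => sum_n (fun l => u j l k) d) d)).
  2:{ intro k. rewrite Cconj_poly_eval. unfold poly_eval.
      rewrite <- sum_n_Cmult_r, <- sum_n_Cmult_l. apply sum_n_ext. intro j.
      rewrite <- !sum_n_Cmult_l. apply sum_n_ext. intro l.
      unfold u. rewrite Cpow_add_r. Cring. }
  rewrite (sum_n_switch (fun k j => sum_n (fun l => u j l k) d)).
  rewrite (sum_n_ext _ (fun j => sum_n (fun l => sum_n (u j l) N) d))
    by (intro j; apply (sum_n_switch (fun k l => u j l k))).
  unfold autocorr. rewrite <- sum_n_Cmult_l. apply sum_n_ext_loc. intros j Hj.
  rewrite (sum_n_ext_loc _ (fun l => if (j + m =? l)%nat then (INR (S N) * (x j * Cconj (x l)))%C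
                                     else RtoC 0)).
  2:{ intros l Hl. unfold u. rewrite sum_n_Cmult_l, sum_unit_root_orth by lia.
      destruct (j + m =? l)%nat; Cring. }
  rewrite sum_n_kronecker. destruct (Nat.leb_spec (j + m) d); [reflexivity|].
  rewrite (x_support (j + m)%nat), Cconj_RtoC by lia. Cring.
Qed.

Lemma autocorr_beyond m : (d < m)%nat -> autocorr x d m = RtoC 0.
Proof.
  intros Hm. unfold autocorr.
  rewrite (sum_n_ext _ (fun _ => RtoC 0)).
  - apply sum_n_C0.
  - intro j. rewrite (x_support (j + m)%nat), Cconj_RtoC by lia. Cring.
Qed.

Lemma sum_n_autocorr_trunc (b : nat -> C) M : (d <= M)%nat ->
  sum_n (fun m => b m * autocorr x d m)%C M = sum_n (fun m => b m * autocorr x d m)%C d.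
Proof.
  intros Hd. induction Hd as [|M Hd IH]; [reflexivity|].
  rewrite sum_Sn_C, IH, autocorr_beyond by lia. Cring.
Qed.

Lemma Re_autocorr_form_ge (b : nat -> C) M eps : (d <= M)%nat ->
  (forall k, (k <= M + d)%nat -> - eps <= Re (poly_eval b M (unit_root (M + d) k))) ->
  - eps * Re (autocorr x d 0) <= Re (sum_n (fun m => b m * autocorr x d m)%C d).
Proof.
  intros Hd Hb. set (N := (M + d)%nat) in Hb.
  set (P k := poly_eval x d (unit_root N k)).
  assert (HPP : forall k, (P k * Cconj (P k))%C = RtoC (Cmod (P k) ^ 2))
    by (intro k; now rewrite Cmod2_conj).
  assert (Hmean : forall m, (m <= M)%nat ->
    sum_n (fun k => unit_root N k ^ m * (P k * Cconj (P k)))%C N = (INR (S N) * autocorr x d m)%C)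
    by (intros m Hm; apply sum_unit_root_pow_mul_sqnorm; unfold N; lia).
  assert (Hform : sum_n (fun k => poly_eval b M (unit_root N k) * (P k * Cconj (P k)))%C N =
                  (INR (S N) * sum_n (fun m => b m * autocorr x d m)%C M)%C).
  { unfold poly_eval at 1.
    rewrite (sum_n_ext _ (fun k => sum_n (fun m => b m * (unit_root N k ^ m * (P k * Cconj (P k))))%C M)).
    2:{ intro k. rewrite <- sum_n_Cmult_r. apply sum_n_ext. intro m. Cring. }
    rewrite (sum_n_switch (fun k m => b m * (unit_root N k ^ m * (P k * Cconj (P k))))%C).
    rewrite <- sum_n_Cmult_l. apply sum_n_ext_loc. intros m Hm.
    rewrite sum_n_Cmult_l, Hmean by exact Hm. Cring. }
  assert (HN : 0 < INR (S N)) by (apply lt_0_INR; lia).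
  assert (Hlow : sum_n (fun k => - eps * Re (unit_root N k ^ 0 * (P k * Cconj (P k)))%C) N <=
                 sum_n (fun k => Re (poly_eval b M (unit_root N k) * (P k * Cconj (P k)))%C) N).
  { apply sum_n_Rle. intros k Hk. rewrite HPP, !Re_Cmult_RtoC.
    replace (Re (unit_root N k ^ 0)%C) with 1 by reflexivity. pose proof (pow2_ge_0 (Cmod (P k))).
    specialize (Hb k Hk). nra. }
  rewrite (sum_n_ext _ (fun k => scal (- eps) (Re (unit_root N k ^ 0 * (P k * Cconj (P k)))%C)))
    in Hlow by reflexivity.
  rewrite sum_n_scal_l, <- !Re_sum_n, Hform, (Hmean 0%nat) in Hlow by lia.
  change scal with Rmult in Hlow. rewrite !Re_RtoC_Cmult in Hlow.
  rewrite <- (sum_n_autocorr_trunc b M Hd). nra.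
Qed.

End Autocorrelation.

(** * Difference quotients in the class R *)

Lemma is_derive_C_iff (f : C -> C) z l :
  is_derive (K := C_AbsRing) (V := C_NormedModule) f z l <->
  forall eps, 0 < eps -> exists del, 0 < del /\ forall y, Cmod (y - z) < del ->
    Cmod (f y - f z - (y - z) * l) <= eps * Cmod (y - z).
Proof.
  split.
  - intros [_ Hd] eps Heps.
    destruct (Hd z (fun P HP => HP) (mkposreal eps Heps)) as [del Hdel].
    exists del. split; [apply cond_pos|]. exact Hdel.
  - intros H. split; [apply is_linear_scal_l|].
    intros x Hx.
    apply (is_filter_lim_locally_unique (K := C_AbsRing)
             (V := AbsRing_NormedModule C_AbsRing)) in Hx. subst x.
    intros eps. destruct (H eps (cond_pos eps)) as [del [Hdel Hy]].
    exists (mkposreal del Hdel). exact Hy.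
Qed.

Lemma Re_line_derive (f : C -> C) (z1 d l : C) (t : R) : d <> RtoC 0 ->
  is_derive (K := C_AbsRing) (V := C_NormedModule) f (z1 + RtoC t * d)%C l ->
  derivable_pt_lim (fun s => Re (f (z1 + RtoC s * d) / d)%C) t (Re l).
Proof.
  intros Hd Hf eps Heps.
  assert (Hdm : 0 < Cmod d) by (apply Cmod_gt_0; exact Hd).
  destruct (proj1 (is_derive_C_iff _ _ _) Hf (eps / 2) ltac:(lra)) as [del [Hdel Hy]].
  exists (mkposreal (del / Cmod d) (Rdiv_lt_0_compat _ _ Hdel Hdm)).
  intros h Hh0 Hh. change (Rabs h < del / Cmod d) in Hh.
  set (z := (z1 + RtoC t * d)%C) in *.
  set (y := (z1 + RtoC (t + h) * d)%C).
  assert (Eyz : (y - z = RtoC h * d)%C) by (unfold y, z; rewrite RtoC_plus; ring).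
  assert (Hyz : Cmod (y - z) < del).
  { rewrite Eyz, Cmod_mult, Cmod_R.
    apply (Rmult_lt_compat_r (Cmod d)) in Hh; [|lra].
    unfold Rdiv in Hh. rewrite Rmult_assoc, Rinv_l, Rmult_1_r in Hh; lra. }
  specialize (Hy y Hyz). rewrite Eyz, Cmod_mult, Cmod_R in Hy.
  change (Rabs ((Re (f y / d)%C - Re (f z / d)%C) / h - Re l) < eps).
  assert (E : (Re (f y / d)%C - Re (f z / d)%C) / h - Re l =
              Re ((f y - f z - RtoC h * d * l) / d)%C / h).
  { replace ((f y - f z - RtoC h * d * l) / d)%C with (f y / d - f z / d - RtoC h * l)%C
      by (field; exact Hd).
    rewrite !Re_Cminus, Re_RtoC_Cmult. field. exact Hh0. }
  rewrite E.
  assert (Hh' : 0 < Rabs h) by (apply Rabs_pos_lt; exact Hh0).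
  unfold Rdiv. rewrite Rabs_mult, Rabs_inv.
  apply (Rmult_lt_reg_r (Rabs h)); [lra|]. rewrite Rmult_assoc, Rinv_l, Rmult_1_r by lra.
  eapply Rle_lt_trans; [apply re_le_Cmod|].
  rewrite Cmod_div by exact Hd.
  apply (Rmult_lt_reg_r (Cmod d)); [lra|]. unfold Rdiv. rewrite Rmult_assoc, Rinv_l, Rmult_1_r by lra.
  assert (0 < eps * Rabs h * Cmod d) by (repeat apply Rmult_lt_0_compat; lra). lra.
Qed.

(* Mean value theorem for [t |-> Re (f (z1 + t (z2 - z1)) / (z2 - z1))] on [0, 1]. *)
Lemma Re_diff_quotient_pos (f f' : C -> C) (z1 z2 : C) : z1 <> z2 ->
  (forall t, 0 <= t <= 1 ->
     is_derive (K := C_AbsRing) (V := C_NormedModule) f (z1 + RtoC t * (z2 - z1))%C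
       (f' (z1 + RtoC t * (z2 - z1))%C) /\
     0 < Re (f' (z1 + RtoC t * (z2 - z1))%C)) ->
  0 < Re ((f z2 - f z1) / (z2 - z1))%C.
Proof.
  intros Hne Hseg. set (d := (z2 - z1)%C) in *.
  assert (Hd : d <> RtoC 0)
    by (intro h; apply Hne; replace z2 with (d + z1)%C by (unfold d; ring); rewrite h; ring).
  set (phi := fun s => Re (f (z1 + RtoC s * d) / d)%C).
  assert (Hder : forall s, 0 <= s <= 1 -> derivable_pt_lim phi s (Re (f' (z1 + RtoC s * d)%C)))
    by (intros s Hs; apply Re_line_derive; [exact Hd|apply Hseg, Hs]).
  destruct (MVT_gen phi 0 1 (fun s => Re (f' (z1 + RtoC s * d)%C))) as [c [Hc E]].
  - intros s Hs. rewrite Rmin_left, Rmax_right in Hs by lra.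
    apply is_derive_Reals, Hder. lra.
  - intros s Hs. rewrite Rmin_left, Rmax_right in Hs by lra.
    apply derivable_continuous_pt. exists (Re (f' (z1 + RtoC s * d)%C)). apply Hder. lra.
  - rewrite Rmin_left, Rmax_right in Hc by lra.
    pose proof (proj2 (Hseg c Hc)) as Hpos. fold d in Hpos.
    unfold phi in E.
    replace (z1 + RtoC 1 * d)%C with z2 in E by (unfold d; ring).
    replace (z1 + RtoC 0 * d)%C with z1 in E by ring.
    replace ((f z2 - f z1) / d)%C with (f z2 / d - f z1 / d)%C by (field; exact Hd).
    rewrite Re_Cminus. nra.
Qed.

Lemma in_disk_segment (z1 z2 : C) (t : R) : in_disk z1 -> in_disk z2 -> 0 <= t <= 1 ->
  in_disk (z1 + RtoC t * (z2 - z1))%C.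
Proof.
  unfold in_disk. intros H1 H2 Ht.
  replace (z1 + RtoC t * (z2 - z1))%C with (RtoC (1 - t) * z1 + RtoC t * z2)%C
    by (rewrite RtoC_minus; ring).
  eapply Rle_lt_trans; [apply Cmod_triangle|]. rewrite !Cmod_mult, !Cmod_R, !Rabs_pos_eq by lra.
  destruct (Req_dec t 1) as [->|Ht1]; [lra|].
  assert (0 < (1 - t) * (1 - Cmod z1)) by (apply Rmult_lt_0_compat; lra).
  assert (0 <= t * (1 - Cmod z2)) by (apply Rmult_le_pos; lra). lra.
Qed.

Lemma class_R_diff_quotient_pos (f : C -> C) (z1 z2 : C) :
  in_class_R f -> in_disk z1 -> in_disk z2 -> z1 <> z2 ->
  0 < Re ((f z2 - f z1) / (z2 - z1))%C.
Proof.
  intros [f' [Hf' [_ [_ Hpos]]]] H1 H2 Hne.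
  apply (Re_diff_quotient_pos f f' z1 z2 Hne). intros t Ht.
  pose proof (in_disk_segment z1 z2 t H1 H2 Ht). split; [apply Hf'|apply Hpos]; assumption.
Qed.

(** * Truncated power series on concentric circles *)

Lemma is_series_shift2 (u v : nat -> C) l l' :
  (forall k, u (2 + k)%nat = v (2 + k)%nat) -> (l - sum_n u 1 = l' - sum_n v 1)%C ->
  is_series (V := C_NormedModule) u l -> is_series (V := C_NormedModule) v l'.
Proof.
  intros Huv Hl Hu.
  apply (is_series_decr_n v 2 l' ltac:(lia)).
  change (is_series (fun k => v (2 + k)%nat) (l' - sum_n v 1)%C). rewrite <- Hl.
  apply (is_series_ext _ _ _ Huv), (is_series_incr_n u 2 _ ltac:(lia)).
  change (is_series u (l - sum_n u 1 + sum_n u 1)%C).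
  replace (l - sum_n u 1 + sum_n u 1)%C with l by ring. exact Hu.
Qed.

Definition series_coeff (a : nat -> C) (n : nat) : C :=
  match n with 0 => RtoC 0 | 1 => RtoC 1 | _ => a n end.

Lemma has_coeffs_iff (f : C -> C) (a : nat -> C) :
  has_coeffs f a <-> forall z, in_disk z ->
    is_series (V := C_NormedModule) (fun n => series_coeff a n * z ^ n)%C (f z).
Proof.
  assert (Hagree : forall z k,
    (if (2 + k <? 2)%nat then RtoC 0 else (a (2 + k)%nat * pow_n z (2 + k))%C) =
    (series_coeff a (2 + k) * z ^ (2 + k))%C)
    by (intros z k; simpl; now rewrite pow_n_Cpow).
  split; intros H z Hz.
  - refine (is_series_shift2 _ _ _ _ (Hagree z) _ (H z Hz)).
    rewrite !sum_Sn_C, !sum_O. simpl. Cring.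
  - refine (is_series_shift2 _ _ _ _ (fun k => eq_sym (Hagree z k)) _ (H z Hz)).
    rewrite !sum_Sn_C, !sum_O. simpl. Cring.
Qed.

Lemma is_series_terms_bounded (u : nat -> C) l :
  is_series (V := C_NormedModule) u l -> exists B, forall n, Cmod (u n) <= B.
Proof.
  intros Hl. destruct (filterlim_bounded (sum_n u) (ex_intro _ l Hl)) as [M HM].
  exists (2 * M). intros [|n].
  - pose proof (HM 0%nat) as H0. rewrite sum_O in H0.
    pose proof (Cmod_ge_0 (u 0%nat)). change (Cmod (u 0%nat) <= M) in H0. lra.
  - replace (u (S n)) with (sum_n u (S n) - sum_n u n)%C by (rewrite sum_Sn_C; Cring).
    eapply Rle_trans; [apply Cmod_triangle|]. rewrite Cmod_opp.
    pose proof (HM (S n)). pose proof (HM n). change norm with Cmod in *. lra.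
Qed.

Lemma class_coeff_bound (f : C -> C) (a : nat -> C) rho : has_coeffs f a -> 0 < rho < 1 ->
  exists B, forall n, Cmod (series_coeff a n) * rho ^ n <= B.
Proof.
  intros Ha Hrho.
  assert (Hd : in_disk (RtoC rho)) by (unfold in_disk; rewrite Cmod_R, Rabs_pos_eq; lra).
  destruct (is_series_terms_bounded _ _ (proj1 (has_coeffs_iff f a) Ha _ Hd)) as [B HB].
  exists B. intro n. specialize (HB n).
  rewrite Cmod_mult, Cmod_pow, Cmod_R, Rabs_pos_eq in HB by lra. exact HB.
Qed.

Lemma series_trunc_error (f : C -> C) (a : nat -> C) B rho z r M :
  has_coeffs f a -> (forall n, Cmod (series_coeff a n) * rho ^ n <= B) ->
  0 < rho -> 0 <= r < rho -> Cmod z <= r -> in_disk z ->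
  Cmod (f z - poly_eval (series_coeff a) M z) <= B * (r / rho) ^ S M / (1 - r / rho).
Proof.
  intros Ha HB Hrho Hr Hz Hdz.
  apply (is_series_tail_geom_le _ _ _ _ _ (proj1 (has_coeffs_iff f a) Ha z Hdz)).
  - split; [apply Rdiv_le_0_compat; lra|].
    apply (Rmult_lt_reg_r rho); [lra|]. unfold Rdiv. rewrite Rmult_assoc, Rinv_l; lra.
  - intro n. rewrite Cmod_mult, Cmod_pow.
    replace (B * (r / rho) ^ n) with (B / rho ^ n * r ^ n)
      by (unfold Rdiv; rewrite Rpow_mult_distr, pow_inv; field; apply pow_nonzero; lra).
    assert (Hrn : 0 < rho ^ n) by (apply pow_lt; lra).
    apply Rmult_le_compat; [apply Cmod_ge_0|apply pow_le, Cmod_ge_0| |].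
    + apply (Rmult_le_reg_r (rho ^ n) _ _ Hrn).
      unfold Rdiv. rewrite Rmult_assoc, Rinv_l, Rmult_1_r by lra. apply HB.
    + apply pow_incr. split; [apply Cmod_ge_0|exact Hz].
Qed.

Definition pow_diff_quot (r r' : R) (n : nat) : R := (r' ^ n - r ^ n) / (r' - r).

Lemma poly_eval_diff_quot (c : nat -> C) r r' w M : r <> r' -> w <> RtoC 0 ->
  ((poly_eval c (S M) (RtoC r' * w) - poly_eval c (S M) (RtoC r * w)) / (RtoC (r' - r) * w))%C =
  poly_eval (fun m => c (S m) * RtoC (pow_diff_quot r r' (S m)))%C M w.
Proof.
  intros Hr Hw. assert (Hrr : RtoC (r' - r) <> RtoC 0) by (intro h; injection h; lra).
  assert (Hterm : forall n, (c (S n) * (RtoC r' * w) ^ S n - c (S n) * (RtoC r * w) ^ S n)%C =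
                           (RtoC (r' - r) * w * (c (S n) * RtoC (pow_diff_quot r r' (S n)) * w ^ n))%C).
  { intro n. unfold pow_diff_quot. rewrite !Cpow_mult_l, <- !RtoC_pow, RtoC_div, !RtoC_minus by lra.
    rewrite RtoC_minus in Hrr. change (w ^ S n)%C with (w * w ^ n)%C. field. exact Hrr. }
  unfold poly_eval. induction M as [|M IH].
  - rewrite !sum_Sn_C, !sum_O.
    transitivity ((c 1%nat * (RtoC r' * w) ^ 1 - c 1%nat * (RtoC r * w) ^ 1) / (RtoC (r' - r) * w))%C;
      [simpl; field; split; assumption|].
    rewrite (Hterm 0%nat). field. split; assumption.
  - rewrite (sum_Sn_C (fun m => c (S m) * RtoC (pow_diff_quot r r' (S m)) * w ^ m)%C M).
    rewrite (sum_Sn_C _ (S M)), (sum_Sn_C _ (S M)), <- IH.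
    match goal with |- ((?A' + ?t' - (?A + ?t)) / ?D)%C = _ =>
      transitivity ((A' - A) / D + (t' - t) / D)%C; [field; split; assumption|] end.
    rewrite Hterm. field. split; assumption.
Qed.

Definition radial_coeff (a : nat -> C) (r r' : R) (m : nat) : C :=
  (series_coeff a (S m) * RtoC (pow_diff_quot r r' (S m)))%C.

Lemma radial_diff_quot_trunc_error (f : C -> C) (a : nat -> C) B rho r r' w M :
  has_coeffs f a -> (forall n, Cmod (series_coeff a n) * rho ^ n <= B) ->
  0 < r < r' -> r' < rho < 1 -> Cmod w = 1 ->
  Cmod ((f (RtoC r' * w) - f (RtoC r * w)) / (RtoC (r' - r) * w)
        - poly_eval (radial_coeff a r r') M w)%C <=
  2 * B * (r' / rho) ^ S (S M) / ((1 - r' / rho) * (r' - r)).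
Proof.
  intros Ha HB Hr Hrho Hw.
  assert (Hw0 : w <> RtoC 0) by (intro h; rewrite h, Cmod_0 in Hw; lra).
  assert (HD : (RtoC (r' - r) * w)%C <> RtoC 0).
  { intro h. apply (f_equal Cmod) in h.
    rewrite Cmod_0, Cmod_mult, Cmod_R, Hw, Rabs_pos_eq in h; lra. }
  assert (Hq : r' / rho < 1)
    by (apply (Rmult_lt_reg_r rho); [lra|]; unfold Rdiv; rewrite Rmult_assoc, Rinv_l; lra).
  set (P := poly_eval (series_coeff a) (S M)).
  assert (Htail : forall s, 0 < s <= r' ->
            Cmod (f (RtoC s * w) - P (RtoC s * w))%C <= B * (r' / rho) ^ S (S M) / (1 - r' / rho)).
  { intros s Hs. assert (Cmod (RtoC s * w) = s)
      by (rewrite Cmod_mult, Cmod_R, Hw, Rabs_pos_eq; lra).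
    apply (series_trunc_error f a); try assumption; unfold in_disk; lra. }
  unfold radial_coeff. rewrite <- poly_eval_diff_quot by (lra || exact Hw0). fold P.
  replace ((f (RtoC r' * w) - f (RtoC r * w)) / (RtoC (r' - r) * w)
           - (P (RtoC r' * w) - P (RtoC r * w)) / (RtoC (r' - r) * w))%C
    with (((f (RtoC r' * w) - P (RtoC r' * w)) - (f (RtoC r * w) - P (RtoC r * w)))
          / (RtoC (r' - r) * w))%C
    by (field; split; [exact Hw0|intro h; injection h; lra]).
  rewrite Cmod_div by exact HD. rewrite Cmod_mult, Cmod_R, Hw, Rabs_pos_eq, Rmult_1_r by lra.
  replace (2 * B * (r' / rho) ^ S (S M) / ((1 - r' / rho) * (r' - r)))
    with ((B * (r' / rho) ^ S (S M) / (1 - r' / rho)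
           + B * (r' / rho) ^ S (S M) / (1 - r' / rho)) / (r' - r)) by (field; lra).
  apply Rmult_le_compat_r; [apply Rlt_le, Rinv_0_lt_compat; lra|].
  eapply Rle_trans; [apply Cmod_triangle|]. rewrite Cmod_opp.
  apply Rplus_le_compat; apply Htail; lra.
Qed.

Lemma Re_radial_poly_ge (f : C -> C) (a : nat -> C) B rho r r' w M :
  in_class_R f -> has_coeffs f a -> (forall n, Cmod (series_coeff a n) * rho ^ n <= B) ->
  0 < r < r' -> r' < rho < 1 -> Cmod w = 1 ->
  - (2 * B * (r' / rho) ^ S (S M) / ((1 - r' / rho) * (r' - r))) <=
  Re (poly_eval (radial_coeff a r r') M w).
Proof.
  intros Hf Ha HB Hr Hrho Hw.
  set (z1 := (RtoC r * w)%C). set (z2 := (RtoC r' * w)%C).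
  assert (Hz1 : Cmod z1 = r) by (unfold z1; rewrite Cmod_mult, Cmod_R, Hw, Rabs_pos_eq; lra).
  assert (Hz2 : Cmod z2 = r') by (unfold z2; rewrite Cmod_mult, Cmod_R, Hw, Rabs_pos_eq; lra).
  assert (E21 : (z2 - z1 = RtoC (r' - r) * w)%C) by (unfold z1, z2; rewrite RtoC_minus; ring).
  assert (Hne : z1 <> z2) by (intro h; rewrite h in Hz1; lra).
  pose proof (class_R_diff_quotient_pos f z1 z2 Hf ltac:(unfold in_disk; lra)
                ltac:(unfold in_disk; lra) Hne) as Hpos.
  pose proof (radial_diff_quot_trunc_error f a B rho r r' w M Ha HB Hr Hrho Hw) as Hgap.
  fold z1 z2 in Hgap. rewrite <- E21 in Hgap.
  pose proof (re_le_Cmod ((f z2 - f z1) / (z2 - z1) - poly_eval (radial_coeff a r r') M w)%C) as Hre.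
  rewrite Re_Cminus in Hre.
  pose proof (Rle_abs (Re ((f z2 - f z1) / (z2 - z1))%C - Re (poly_eval (radial_coeff a r r') M w))).
  lra.
Qed.

Lemma nonneg_of_geom_lower_bounds (q K c : R) M0 : 0 <= q < 1 ->
  (forall M, (M0 <= M)%nat -> - K * q ^ M <= c) -> 0 <= c.
Proof.
  intros Hq H. destruct (Rle_or_lt 0 c) as [Hc|Hc]; [exact Hc|]. exfalso.
  assert (HK : 0 < Rabs K + 1) by (pose proof (Rabs_pos K); lra).
  destruct (pow_lt_1_zero q ltac:(rewrite Rabs_pos_eq; lra) (- c / (Rabs K + 1))
              ltac:(apply Rdiv_lt_0_compat; lra)) as [N HN].
  specialize (HN (max N M0) (Nat.le_max_l _ _)). specialize (H (max N M0) (Nat.le_max_r _ _)).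
  set (t := q ^ max N M0) in *.
  assert (Ht : 0 <= t) by (apply pow_le; lra). rewrite Rabs_pos_eq in HN by exact Ht.
  apply (Rmult_lt_compat_r (Rabs K + 1)) in HN; [|lra].
  unfold Rdiv in HN. rewrite Rmult_assoc, Rinv_l, Rmult_1_r in HN by lra.
  assert (K * t <= Rabs K * t) by (apply Rmult_le_compat_r; [exact Ht|apply Rle_abs]).
  lra.
Qed.

Lemma Re_radial_autocorr_nonneg (f : C -> C) (a x : nat -> C) r r' d :
  in_class_R f -> has_coeffs f a -> 0 < r < r' -> r' < 1 ->
  (forall j, (d < j)%nat -> x j = RtoC 0) ->
  0 <= Re (sum_n (fun m => radial_coeff a r r' m * autocorr x d m)%C d).
Proof.
  intros Hf Ha Hr Hr1 Hsupp.
  set (rho := (1 + r') / 2).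
  destruct (class_coeff_bound f a rho Ha ltac:(unfold rho; lra)) as [B HB].
  set (q := r' / rho).
  assert (Hq : 0 <= q < 1).
  { unfold q, rho. split; [apply Rdiv_le_0_compat; lra|].
    apply (Rmult_lt_reg_r ((1 + r') / 2)); [lra|]. field_simplify; lra. }
  apply (nonneg_of_geom_lower_bounds q
           (2 * B * q ^ 2 / ((1 - q) * (r' - r)) * Re (autocorr x d 0)) _ d Hq).
  intros M HM.
  replace (- (2 * B * q ^ 2 / ((1 - q) * (r' - r)) * Re (autocorr x d 0)) * q ^ M)
    with (- (2 * B * q ^ S (S M) / ((1 - q) * (r' - r))) * Re (autocorr x d 0))
    by (replace (S (S M)) with (2 + M)%nat by lia; rewrite pow_add; field; lra).
  apply (Re_autocorr_form_ge x d Hsupp _ M _ HM). intros k _.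
  apply (Re_radial_poly_ge f a B rho); try assumption; try (unfold rho; lra).
  apply Cmod_cis.
Qed.

Lemma nonneg_of_small_perturbations (c b e : R) :
  (forall eta, 0 < eta <= 1/4 -> 0 <= c - eta * b + eta ^ 2 * e) -> 0 <= c.
Proof.
  intros H. destruct (Rle_or_lt 0 c) as [Hc|Hc]; [exact Hc|]. exfalso.
  set (K := Rabs b + Rabs e + 1).
  assert (HK : 1 <= K) by (unfold K; pose proof (Rabs_pos b); pose proof (Rabs_pos e); lra).
  set (eta := Rmin (1/4) (- c / (2 * K))).
  assert (He1 : eta <= 1/4) by apply Rmin_l.
  assert (He2 : eta * K <= - c / 2).
  { pose proof (Rmin_r (1/4) (- c / (2 * K))) as Hm. fold eta in Hm.
    apply (Rmult_le_compat_r K) in Hm; [|lra].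
    replace (- c / (2 * K) * K) with (- c / 2) in Hm by (field; lra). exact Hm. }
  assert (He0 : 0 < eta) by (apply Rmin_glb_lt; [lra|apply Rdiv_lt_0_compat; lra]).
  specialize (H eta ltac:(lra)).
  assert (- eta * b <= eta * Rabs b)
    by (pose proof (Rle_abs (- b)); rewrite Rabs_Ropp in *; nra).
  assert (eta ^ 2 * e <= eta * Rabs e).
  { pose proof (Rle_abs e). pose proof (Rabs_pos e).
    assert (eta ^ 2 <= eta) by (simpl; nra). nra. }
  unfold K in *. lra.
Qed.

Definition vec3 (x0 x1 x2 : C) (n : nat) : C :=
  match n with 0 => x0 | 1 => x1 | 2 => x2 | _ => RtoC 0 end.

Lemma vec3_support x0 x1 x2 j : (2 < j)%nat -> vec3 x0 x1 x2 j = RtoC 0.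
Proof. intros Hj. do 3 (destruct j as [|j]; [lia|]). reflexivity. Qed.

Definition toeplitz_form (a2 a3 x0 x1 x2 : C) : R :=
  let rho := autocorr (vec3 x0 x1 x2) 2 in
  Re (rho 0%nat) + 2 * Re (a2 * rho 1%nat)%C + 3 * Re (a3 * rho 2%nat)%C.

Lemma class_R_toeplitz_form_nonneg (f : C -> C) (a : nat -> C) x0 x1 x2 :
  in_class_R f -> has_coeffs f a -> 0 <= toeplitz_form (a 2%nat) (a 3%nat) x0 x1 x2.
Proof.
  intros Hf Ha. unfold toeplitz_form. set (rho := autocorr (vec3 x0 x1 x2) 2).
  apply (nonneg_of_small_perturbations _ (3 * Re (a 2%nat * rho 1%nat)%C + 9 * Re (a 3%nat * rho 2%nat)%C)
           (7 * Re (a 3%nat * rho 2%nat)%C)).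
  intros eta Heta.
  (* Radii [1 - 2 eta < 1 - eta]: the radial coefficients [2 - 3 eta] and
     [3 - 9 eta + 7 eta^2] of [a_2], [a_3] tend to [2] and [3] as [eta -> 0]. *)
  pose proof (Re_radial_autocorr_nonneg f a (vec3 x0 x1 x2) (1 - 2 * eta) (1 - eta) 2 Hf Ha
                ltac:(lra) ltac:(lra) (vec3_support x0 x1 x2)) as H.
  assert (Q1 : pow_diff_quot (1 - 2 * eta) (1 - eta) 1 = 1) by (unfold pow_diff_quot; field; lra).
  assert (Q2 : pow_diff_quot (1 - 2 * eta) (1 - eta) 2 = 2 - 3 * eta)
    by (unfold pow_diff_quot; field; lra).
  assert (Q3 : pow_diff_quot (1 - 2 * eta) (1 - eta) 3 = 3 - 9 * eta + 7 * eta ^ 2)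
    by (unfold pow_diff_quot; field; lra).
  rewrite !sum_Sn_C, sum_O in H. unfold radial_coeff in H. simpl series_coeff in H.
  rewrite Q1, Q2, Q3 in H. fold rho in H.
  destruct (rho 0%nat) as [u0 v0], (rho 1%nat) as [u1 v1], (rho 2%nat) as [u2 v2],
    (a 2%nat) as [p q], (a 3%nat) as [s t].
  unfold Re, Cmult, Cplus, RtoC in *; simpl in *. nra.
Qed.

Lemma toeplitz_form_1_opp_0 (a2 a3 : C) :
  toeplitz_form a2 a3 (RtoC 1) (- a2)%C (RtoC 0) = 1 - Cmod a2 ^ 2.
Proof.
  rewrite Cmod2_alt. destruct a2 as [p q], a3 as [s t].
  unfold toeplitz_form, autocorr. rewrite !sum_Sn_C, !sum_O. simpl.
  unfold Re, Im, Cmult, Cplus, Cconj, Copp, RtoC; simpl. ring.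
Qed.

(* With [D = 3 a3 - 2 a2^2] and [m = |D|], this vector reduces the form to
   [(1 - |a2|^2) (m^2 + |D|^2) - m |D|^2]. *)
Lemma toeplitz_form_extremal_vector (a2 a3 : C) (m : R) :
  let D := (RtoC 3 * a3 - RtoC 2 * (a2 * a2))%C in
  toeplitz_form a2 a3 (RtoC (- m)) (a2 * RtoC m - Cconj a2 * D)%C D =
  (1 - Cmod a2 ^ 2) * (m ^ 2 + Cmod D ^ 2) - m * Cmod D ^ 2.
Proof.
  intros D. unfold D. rewrite !Cmod2_alt. destruct a2 as [p q], a3 as [s t].
  unfold toeplitz_form, autocorr. rewrite !sum_Sn_C, !sum_O. simpl.
  unfold Re, Im, Cmult, Cplus, Cminus, Cconj, Copp, RtoC; simpl. ring.
Qed.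

Lemma coeff_bounds_of_toeplitz (a2 a3 : C) :
  (forall x0 x1 x2, 0 <= toeplitz_form a2 a3 x0 x1 x2) ->
  Cmod a2 <= 1 /\ Cmod (a3 - RtoC (3/2) * (a2 * a2)) <= 5/6.
Proof.
  intros H.
  pose proof (H (RtoC 1) (- a2)%C (RtoC 0)) as H1. rewrite toeplitz_form_1_opp_0 in H1.
  pose proof (Cmod_ge_0 a2) as Ha2.
  split; [nra|].
  set (D := (RtoC 3 * a3 - RtoC 2 * (a2 * a2))%C).
  set (m := Cmod D). assert (Hm0 : 0 <= m) by apply Cmod_ge_0.
  pose proof (H (RtoC (- m)) (a2 * RtoC m - Cconj a2 * D)%C D) as H2.
  rewrite toeplitz_form_extremal_vector in H2. fold D m in H2.
  assert (Hm : m <= 2 * (1 - Cmod a2 ^ 2)).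
  { destruct (Req_dec m 0) as [->|ne]; [nra|].
    assert (0 < m ^ 2) by (apply pow_lt; lra). nra. }
  replace (a3 - RtoC (3/2) * (a2 * a2))%C with (RtoC (1/3) * D - RtoC (5/6) * (a2 * a2))%C
    by (unfold D; apply injective_projections; simpl; field).
  unfold Cminus. eapply Rle_trans; [apply Cmod_triangle|].
  rewrite Cmod_opp, !Cmod_mult, !Cmod_R, !Rabs_pos_eq by lra. fold m. nra.
Qed.

Lemma class_R_coeff_bounds (f : C -> C) (a : nat -> C) : in_class_R f -> has_coeffs f a ->
  Cmod (a 2%nat) <= 1 /\ Cmod (a 3%nat - RtoC (3/2) * (a 2%nat * a 2%nat)) <= 5/6.
Proof.
  intros Hf Ha. apply coeff_bounds_of_toeplitz. intros x0 x1 x2.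
  exact (class_R_toeplitz_form_nonneg f a x0 x1 x2 Hf Ha).
Qed.

(** * Differentiating power series; the extremal function *)

Lemma is_derive_C_of_quadratic_error (f : C -> C) z l K eta : 0 < eta ->
  (forall h, Cmod h < eta -> Cmod (f (z + h) - f z - h * l)%C <= K * Cmod h ^ 2) ->
  is_derive (K := C_AbsRing) (V := C_NormedModule) f z l.
Proof.
  intros Heta H. apply is_derive_C_iff. intros eps Heps.
  set (K' := Rabs K + 1). assert (HK : 0 < K') by (unfold K'; pose proof (Rabs_pos K); lra).
  exists (Rmin eta (eps / K')). split; [apply Rmin_glb_lt; [lra|apply Rdiv_lt_0_compat; lra]|].
  intros y Hy. set (h := (y - z)%C) in *.
  assert (Hh1 : Cmod h < eta) by (eapply Rlt_le_trans; [exact Hy|apply Rmin_l]).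
  assert (Hh2 : K' * Cmod h <= eps).
  { pose proof (Rmin_r eta (eps / K')) as Hm.
    apply (Rmult_le_reg_r (/ K')); [apply Rinv_0_lt_compat; lra|].
    replace (K' * Cmod h * / K') with (Cmod h) by (field; lra). unfold Rdiv in Hm. lra. }
  specialize (H h Hh1). replace (z + h)%C with y in H by (unfold h; ring).
  pose proof (Cmod_ge_0 h). pose proof (Rle_abs K).
  assert (K * Cmod h ^ 2 <= K' * Cmod h * Cmod h) by (unfold K'; simpl; nra).
  nra.
Qed.

Definition pow_taylor_rem (z h : C) (n : nat) : C :=
  ((z + h) ^ n - z ^ n - RtoC (INR n) * h * z ^ pred n)%C.

Lemma pow_taylor_rem_S z h n :
  pow_taylor_rem z h (S n) = ((z + h) * pow_taylor_rem z h n + RtoC (INR n) * h ^ 2 * z ^ pred n)%C.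
Proof.
  unfold pow_taylor_rem. destruct n as [|n]; [simpl; ring|].
  simpl pred. rewrite !Cpow_S, !S_INR, !RtoC_plus. ring.
Qed.

Lemma pow_taylor_rem_le (z h : C) (rho : R) n : 0 < rho ->
  Cmod z <= rho -> Cmod (z + h) <= rho ->
  rho ^ 2 * Cmod (pow_taylor_rem z h n) <= INR n ^ 2 * Cmod h ^ 2 * rho ^ n.
Proof.
  intros Hr Hz Hzh. induction n as [|n IH].
  - unfold pow_taylor_rem. simpl.
    replace (1 - 1 - RtoC 0 * h * 1)%C with (RtoC 0) by ring. rewrite Cmod_0. lra.
  - rewrite pow_taylor_rem_S. set (E := pow_taylor_rem z h n) in *.
    assert (Hzp : Cmod z ^ pred n <= rho ^ pred n)
      by (apply pow_incr; split; [apply Cmod_ge_0|exact Hz]).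
    assert (Hrn : INR n * (rho ^ 2 * rho ^ pred n) = INR n * rho ^ S n)
      by (destruct n as [|n]; simpl; ring).
    pose proof (Cmod_ge_0 E). pose proof (Cmod_ge_0 h). pose proof (pos_INR n).
    pose proof (pow_le rho n ltac:(lra)). pose proof (pow_le (Cmod z) (pred n) (Cmod_ge_0 z)).
    eapply Rle_trans; [apply Rmult_le_compat_l; [nra|apply Cmod_triangle]|].
    rewrite !Cmod_mult, Cmod_R, !Cmod_pow, Rabs_pos_eq by lra.
    assert (Hfirst : rho ^ 2 * (Cmod (z + h) * Cmod E) <= rho * (INR n ^ 2 * Cmod h ^ 2 * rho ^ n)).
    { rewrite <- (Rmult_comm (Cmod E)), <- Rmult_assoc.
      apply (Rle_trans _ (rho ^ 2 * Cmod E * rho)); [apply Rmult_le_compat_l; [nra|lra]|].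
      rewrite Rmult_comm. apply Rmult_le_compat_l; lra. }
    assert (Hsecond : rho ^ 2 * (INR n * Cmod h ^ 2 * Cmod z ^ pred n) <=
                 Cmod h ^ 2 * (INR n * rho ^ S n)).
    { rewrite <- Hrn. replace (Cmod h ^ 2 * (INR n * (rho ^ 2 * rho ^ pred n)))
        with (rho ^ 2 * (INR n * Cmod h ^ 2 * rho ^ pred n)) by ring.
      apply Rmult_le_compat_l; [nra|]. apply Rmult_le_compat_l; [nra|exact Hzp]. }
    rewrite Rmult_plus_distr_l. eapply Rle_trans; [apply Rplus_le_compat; [exact Hfirst|exact Hsecond]|].
    assert (0 <= Cmod h ^ 2 * rho ^ S n) by (apply Rmult_le_pos; apply pow_le; lra).
    replace (rho * (INR n ^ 2 * Cmod h ^ 2 * rho ^ n) + Cmod h ^ 2 * (INR n * rho ^ S n))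
      with ((INR n ^ 2 + INR n) * (Cmod h ^ 2 * rho ^ S n)) by (simpl; ring).
    replace (INR (S n) ^ 2 * Cmod h ^ 2 * rho ^ S n)
      with (INR (S n) ^ 2 * (Cmod h ^ 2 * rho ^ S n)) by ring.
    apply Rmult_le_compat_r; [assumption|]. rewrite S_INR. nra.
Qed.

Lemma INR_mul_pow_le (rho sig : R) n : 0 < rho < sig ->
  INR n * rho ^ n <= sig ^ n / (sig / rho - 1).
Proof.
  intros H.
  assert (Hx : 0 < sig / rho - 1).
  { apply (Rplus_lt_reg_r 1). ring_simplify. apply (Rmult_lt_reg_r rho); [lra|].
    unfold Rdiv. rewrite Rmult_assoc, Rinv_l, Rmult_1_r; lra. }
  pose proof (Rle_pow_lin (sig / rho - 1) n ltac:(lra)) as Hb.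
  replace (1 + (sig / rho - 1)) with (sig / rho) in Hb by ring.
  assert (Hr : 0 < rho ^ n) by (apply pow_lt; lra).
  replace (sig ^ n) with (rho ^ n * (sig / rho) ^ n)
    by (rewrite <- Rpow_mult_distr; f_equal; field; lra).
  apply (Rmult_le_reg_r (sig / rho - 1)); [lra|].
  replace (rho ^ n * (sig / rho) ^ n / (sig / rho - 1) * (sig / rho - 1))
    with (rho ^ n * (sig / rho) ^ n) by (field; lra).
  replace (INR n * rho ^ n * (sig / rho - 1)) with (rho ^ n * (INR n * (sig / rho - 1))) by ring.
  apply Rmult_le_compat_l; lra.
Qed.

Lemma pseries_taylor_rem_term_le (c : nat -> C) B (z h : C) rho sig n :
  INR n * Cmod (c n) <= B -> 0 < rho < sig -> Cmod z <= rho -> Cmod (z + h) <= rho ->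
  Cmod (c n * pow_taylor_rem z h n)%C <= B * Cmod h ^ 2 / (rho ^ 2 * (sig / rho - 1)) * sig ^ n.
Proof.
  intros Hcn Hrs Hz Hzh. rewrite Cmod_mult.
  assert (Hr2 : 0 < rho ^ 2) by (apply pow_lt; lra).
  assert (Hx : 0 < sig / rho - 1).
  { apply (Rplus_lt_reg_r 1). ring_simplify. apply (Rmult_lt_reg_r rho); [lra|].
    unfold Rdiv. rewrite Rmult_assoc, Rinv_l, Rmult_1_r; lra. }
  pose proof (pow_taylor_rem_le z h rho n ltac:(lra) Hz Hzh) as HE.
  pose proof (INR_mul_pow_le rho sig n Hrs) as Hnp.
  pose proof (Cmod_ge_0 (c n)). pose proof (pos_INR n).
  pose proof (Cmod_ge_0 (pow_taylor_rem z h n)). pose proof (pow2_ge_0 (Cmod h)).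
  assert (HB : 0 <= B) by nra.
  apply (Rmult_le_reg_l (rho ^ 2)); [exact Hr2|].
  replace (rho ^ 2 * (B * Cmod h ^ 2 / (rho ^ 2 * (sig / rho - 1)) * sig ^ n))
    with (B * Cmod h ^ 2 * (sig ^ n / (sig / rho - 1))) by (field; lra).
  apply (Rle_trans _ (Cmod (c n) * (INR n ^ 2 * Cmod h ^ 2 * rho ^ n))); [nra|].
  apply (Rle_trans _ (B * Cmod h ^ 2 * (INR n * rho ^ n))).
  - replace (Cmod (c n) * (INR n ^ 2 * Cmod h ^ 2 * rho ^ n))
      with ((INR n * Cmod (c n)) * (Cmod h ^ 2 * (INR n * rho ^ n))) by ring.
    replace (B * Cmod h ^ 2 * (INR n * rho ^ n)) with (B * (Cmod h ^ 2 * (INR n * rho ^ n))) by ring.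
    apply Rmult_le_compat_r; [|exact Hcn].
    apply Rmult_le_pos; [lra|apply Rmult_le_pos; [lra|apply pow_le; lra]].
  - apply Rmult_le_compat_l; nra.
Qed.

Lemma is_derive_pseries (c : nat -> C) (S : C -> C) B L z :
  (forall n, INR n * Cmod (c n) <= B) ->
  (forall y, Cmod y < 1 -> is_series (V := C_NormedModule) (fun n => c n * y ^ n)%C (S y)) ->
  Cmod z < 1 ->
  is_series (V := C_NormedModule) (fun n => RtoC (INR n) * c n * z ^ pred n)%C L ->
  is_derive (K := C_AbsRing) (V := C_NormedModule) S z L.
Proof.
  intros Hc HS Hz HL.
  assert (HB : 0 <= B) by (specialize (Hc 0%nat); simpl in Hc; lra).
  set (m := Cmod z). pose proof (Cmod_ge_0 z) as Hm0. fold m in Hm0, Hz.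
  set (rho := (1 + m) / 2). set (sig := (1 + rho) / 2). set (x := sig / rho - 1).
  assert (Hrho : 1/2 <= rho < 1) by (unfold rho; lra).
  assert (Hsig : rho < sig < 1) by (unfold sig; lra).
  assert (Hx : 0 < x).
  { unfold x. apply (Rplus_lt_reg_r 1). ring_simplify. apply (Rmult_lt_reg_r rho); [lra|].
    unfold Rdiv. rewrite Rmult_assoc, Rinv_l, Rmult_1_r; lra. }
  assert (Hr2 : 0 < rho ^ 2) by (apply pow_lt; lra).
  apply (is_derive_C_of_quadratic_error S z L (B * sig / (rho ^ 2 * x * (1 - sig))) ((1 - m) / 2));
    [lra|].
  intros h Hh.
  assert (Hzh : Cmod (z + h)%C <= rho) by (eapply Rle_trans; [apply Cmod_triangle|]; fold m; unfold rho; lra).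
  set (v := fun n => (c n * pow_taylor_rem z h n)%C).
  assert (Hv : is_series (V := C_NormedModule) v (S (z + h) - S z - h * L)%C).
  { apply (is_series_ext (fun n => (c n * (z + h) ^ n - c n * z ^ n - h * (RtoC (INR n) * c n * z ^ pred n)))%C).
    { intro n. unfold v, pow_taylor_rem. Cring. }
    apply (is_series_minus _ _ _ _ (is_series_minus _ _ _ _ (HS (z + h)%C ltac:(lra)) (HS _ Hz))
             (is_series_scal_l (K := C_AbsRing) (V := C_NormedModule) h _ _ HL)). }
  set (k := B * Cmod h ^ 2 / (rho ^ 2 * x)).
  assert (Hterm : forall n, Cmod (v n) <= k * sig ^ n)
    by (intro n; apply pseries_taylor_rem_term_le; [apply Hc|lra|fold m; unfold rho; lra|exact Hzh]).
  pose proof (is_series_tail_geom_le v _ k sig 0 Hv ltac:(lra) Hterm) as HT.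
  assert (Hv0 : v 0%nat = RtoC 0) by (unfold v, pow_taylor_rem; simpl; ring).
  rewrite sum_O, Hv0 in HT.
  replace (S (z + h) - S z - h * L - RtoC 0)%C with (S (z + h) - S z - h * L)%C in HT by ring.
  eapply Rle_trans; [exact HT|]. unfold k. right. simpl. field. repeat split; lra.
Qed.

(* The extremal function [- z - 2 log (1 - z)], defined on the disk by its power series. *)
Definition a_ex (n : nat) : C := RtoC (2 / INR n).

Definition f_ex (z : C) : C :=
  epsilon (inhabits (RtoC 0))
    (is_series (V := C_NormedModule) (fun n => series_coeff a_ex n * z ^ n)%C).

Lemma series_coeff_a_ex_bounds n :
  Cmod (series_coeff a_ex n) <= 1 /\ INR n * Cmod (series_coeff a_ex n) <= 2.
Proof.
  destruct n as [|[|n]]; simpl series_coeff; rewrite ?Cmod_0, ?Cmod_1; [simpl; lra|simpl; lra|].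
  unfold a_ex. rewrite Cmod_R.
  assert (H2 : 2 <= INR (S (S n))) by (apply (le_INR 2); lia).
  rewrite Rabs_pos_eq by (apply Rdiv_le_0_compat; lra). split.
  - apply (Rmult_le_reg_r (INR (S (S n)))); [lra|]. unfold Rdiv.
    rewrite Rmult_assoc, Rinv_l; lra.
  - right. field. lra.
Qed.

Lemma is_series_f_ex z : Cmod z < 1 ->
  is_series (V := C_NormedModule) (fun n => series_coeff a_ex n * z ^ n)%C (f_ex z).
Proof.
  intros Hz. unfold f_ex. apply epsilon_spec.
  apply (@ex_series_le C_AbsRing C_CompleteNormedModule _ (fun n => Cmod z ^ n)).
  - intro n. change (Cmod (series_coeff a_ex n * z ^ n)%C <= Cmod z ^ n).
    rewrite Cmod_mult, Cmod_pow. pose proof (proj1 (series_coeff_a_ex_bounds n)).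
    pose proof (pow_le (Cmod z) n (Cmod_ge_0 z)). pose proof (Cmod_ge_0 (series_coeff a_ex n)).
    nra.
  - exists (/ (1 - Cmod z)). apply is_series_geom. rewrite Rabs_pos_eq by apply Cmod_ge_0. exact Hz.
Qed.

Lemma f_ex_0 : f_ex (RtoC 0) = RtoC 0.
Proof.
  apply (filterlim_locally_unique (F := eventually) (sum_n (fun n => series_coeff a_ex n * RtoC 0 ^ n)%C)).
  - apply is_series_f_ex. rewrite Cmod_0. lra.
  - apply is_series_C_limit. intros eps Heps. exists 0%nat. intros n _.
    rewrite (sum_n_ext _ (fun _ => RtoC 0)), sum_n_C0.
    + replace (RtoC 0 - RtoC 0)%C with (RtoC 0) by ring. rewrite Cmod_0. exact Heps.
    + intros [|k]; simpl; ring.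
Qed.

Lemma is_series_f_ex_derivative z : Cmod z < 1 ->
  is_series (V := C_NormedModule)
    (fun n => RtoC (INR n) * series_coeff a_ex n * z ^ pred n)%C ((1 + z) / (1 - z))%C.
Proof.
  intros Hz. pose proof (Cminus_1_neq_0 z Hz) as Hz1.
  apply (is_series_decr_n _ 2 _ ltac:(lia)). change (Init.Nat.pred 2) with 1%nat.
  apply (is_series_ext (fun k => @scal C_AbsRing C_NormedModule (RtoC 2 * z)%C (z ^ k)%C)).
  - intro k. change (RtoC 2 * z * z ^ k =
      RtoC (INR (2 + k)) * RtoC (2 / INR (2 + k)) * z ^ S k)%C.
    rewrite <- RtoC_mult. replace (INR (2 + k) * (2 / INR (2 + k))) with 2.
    + simpl. ring.
    + field. apply not_0_INR. lia.
  - match goal with |- is_series _ ?l => replace l with (@scal C_AbsRing C_NormedModule (RtoC 2 * z)%C (/ (1 - z))%C) end.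
    + apply (is_series_scal_l (K := C_AbsRing)), is_series_Cgeom, Hz.
    + change (@eq C (RtoC 2 * z * / (1 - z))%C
        ((1 + z) / (1 - z) - sum_n (fun n => RtoC (INR n) * series_coeff a_ex n * z ^ pred n) 1)%C).
      rewrite sum_Sn_C, sum_O. simpl. field. exact Hz1.
Qed.

Lemma Re_cayley_pos z : Cmod z < 1 -> 0 < Re ((1 + z) / (1 - z))%C.
Proof.
  intros Hz. pose proof (Cminus_1_neq_0 z Hz) as Hz1.
  assert (Hd : 0 < Cmod (1 - z) ^ 2) by (apply pow_lt, Cmod_gt_0, Hz1).
  assert (Hz2 : Cmod z ^ 2 < 1) by (pose proof (Cmod_ge_0 z); nra).
  rewrite Cmod2_alt in Hd, Hz2.
  destruct z as [p q]. unfold Re, Im in Hd, Hz2; simpl in Hd, Hz2.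
  replace (Re ((1 + (p, q)) / (1 - (p, q)))%C)
    with ((1 - (p ^ 2 + q ^ 2)) / ((1 - p) ^ 2 + q ^ 2)).
  - apply Rdiv_lt_0_compat; simpl; lra.
  - unfold Cdiv, Cinv, Cmult, Cminus, Cplus, Copp, RtoC, Re; simpl. field. nra.
Qed.

Lemma f_ex_in_class_R : in_class_R f_ex.
Proof.
  exists (fun z => ((1 + z) / (1 - z))%C). split; [|split; [exact f_ex_0|split]].
  - intros z Hz. apply (is_derive_pseries (series_coeff a_ex) f_ex 2).
    + intro n. apply series_coeff_a_ex_bounds.
    + exact is_series_f_ex.
    + exact Hz.
    + apply is_series_f_ex_derivative, Hz.
  - field.
  - exact Re_cayley_pos.
Qed.

Lemma f_ex_has_coeffs : has_coeffs f_ex a_ex.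
Proof. apply has_coeffs_iff. exact is_series_f_ex. Qed.

Lemma Gamma_a_ex : Cmod (Gamma1 a_ex) = 1/2 /\ Cmod (Gamma2 a_ex) = 5/12.
Proof.
  unfold Gamma1, Gamma2, a_ex. rewrite <- !RtoC_mult, <- RtoC_minus, <- !RtoC_mult, !Cmod_R.
  simpl INR. split; [rewrite Rabs_left|rewrite Rabs_right]; field_simplify; lra.
Qed.

Theorem mainTheorem6 :
  (forall (f : C -> C) (a : nat -> C),
      in_class_R f -> has_coeffs f a ->
      Cmod (Gamma1 a) <= 1/2 /\ Cmod (Gamma2 a) <= 5/12) /\
  (exists (f : C -> C) (a : nat -> C),
      in_class_R f /\ has_coeffs f a /\
      Cmod (Gamma1 a) = 1/2 /\ Cmod (Gamma2 a) = 5/12).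
Proof.
  split.
  - intros f a Hf Ha. destruct (class_R_coeff_bounds f a Hf Ha) as [H2 H3].
    unfold Gamma1, Gamma2. rewrite !Cmod_mult, !Cmod_R, Rabs_Ropp, Rabs_pos_eq by lra.
    split; lra.
  - exists f_ex, a_ex. split; [exact f_ex_in_class_R|]. split; [exact f_ex_has_coeffs|].
    exact Gamma_a_ex.
Qed.
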